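(* In the session calculus, weak fairness of instructions (WI) coincides with justness (J): a path is WI-fair iff it is just.
   Context: Session calculus: threads $P ::= \mathbf{end} \mid \bigoplus_{i\in I} p_i!\lambda_i;P_i \mid \sum_{i\in I} p_i?\lambda_i;P_i \mid X \mid \mu X.P$ (guarded recursion), thread states additionally $\langle q!\lambda\rangle;P$; networks $p[\![P]\!]\mid 0\mid N\parallel N$ with distinct locations and closed threads, modulo associativity/commutativity/unit. Transitions: (choice) $p[\![\bigoplus_{i\in I}p_i!\lambda_i;P_i]\!]\parallel N \xrightarrow{\tau} p[\![\langle p_k!\lambda_k\rangle;P_k]\!]\parallel N$; (unfold) $p[\![\mu X.P]\!]\parallel N\xrightarrow{\tau} p[\![P\{\mu X.P/X\}]\!]\parallel N$; (comm) $p_k[\![\langle q!\lambda_k\rangle;Q]\!]\parallel q[\![\sum_{i\in I}p_i?\lambda_i;P_i]\!]\parallel N \xrightarrow{(p_k,\lambda_k,q)} p_k[\![Q]\!]\parallel q[\![P_k]\!]\parallel N$. $\mathrm{comp}(t)$ is the moving location for a $\tau$-transition and $\{p,q\}$ for label $(p,\lambda,q)$; $t,u$ are concurrent if $\mathrm{comp}(t)\cap\mathrm{comp}(u)=\emptyset$. A path is a network state with a maximal sequence of transitions. Instructions: the occurrences of subexpressions $p_k!\lambda_k$, $p_k?\lambda_k$ or $\mu X$ in the network expression; each $\tau$-transition stems from exactly one instruction and each communication transition from exactly two (output and matching input); $\mathrm{instr}(t)$ is this set. An instruction $I$ is enabled in $N$ if some transition $t$ from $N$ has $I\in\mathrm{instr}(t)$,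 perpetually enabled on a path if enabled in all its states, and engaged in by a path containing such a $t$. A path $\pi$ is WI-fair if for every suffix $\pi'$, every instruction perpetually enabled on $\pi'$ is engaged in by $\pi'$. A path $\pi$ is just if for every suffix starting in state $s$ and every transition $t$ enabled in $s$, that suffix contains a transition $u$ not concurrent with $t$. *)

From Stdlib Require Import List Arith.
Import ListNotations.

Definition loc := nat.
Definition label := nat.
Definition var := nat.
Definition tag := nat.

(* Thread states.  Every instruction occurrence (p!l, p?l, mu X) carries a
   tag naming that occurrence; a pending output <q!l>;P remembers the tag of
   the output instruction it was selected from. *)
Inductive thread : Type :=
| TEnd : thread
| TOut : branches -> thread
| TIn : branches -> thread
| TVar : var -> thread
| TMu : tag -> var -> thread -> thread
| TPend : loc -> label -> tag -> thread -> thread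
with branches : Type :=
| BNil : branches
| BCons : loc -> label -> tag -> thread -> branches -> branches.

Fixpoint InB (p : loc) (l : label) (a : tag) (P : thread) (bs : branches) : Prop :=
  match bs with
  | BNil => False
  | BCons p' l' a' P' bs' => (p = p' /\ l = l' /\ a = a' /\ P = P') \/ InB p l a P bs'
  end.

(* substitution P{Q/X} (Q closed, so no capture) *)
Fixpoint subst (X : var) (Q : thread) (P : thread) : thread :=
  match P with
  | TEnd => TEnd
  | TOut bs => TOut (substB X Q bs)
  | TIn bs => TIn (substB X Q bs)
  | TVar Y => if Nat.eqb X Y then Q else TVar Y
  | TMu a Y P' => if Nat.eqb X Y then TMu a Y P' else TMu a Y (subst X Q P')
  | TPend q l a P' => TPend q l a (subst X Q P')
  end
with substB (X : var) (Q : thread) (bs : branches) : branches :=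
  match bs with
  | BNil => BNil
  | BCons p l a P bs' => BCons p l a (subst X Q P) (substB X Q bs')
  end.

Definition rmv (X : var) (l : list var) : list var :=
  filter (fun Y => negb (Nat.eqb X Y)) l.

Fixpoint fv (P : thread) : list var :=
  match P with
  | TEnd => []
  | TOut bs | TIn bs => fvB bs
  | TVar X => [X]
  | TMu _ X P' => rmv X (fv P')
  | TPend _ _ _ P' => fv P'
  end
with fvB (bs : branches) : list var :=
  match bs with
  | BNil => []
  | BCons _ _ _ P bs' => fv P ++ fvB bs'
  end.

Fixpoint unguarded (P : thread) : list var :=
  match P with
  | TVar X => [X]
  | TMu _ X P' => rmv X (unguarded P')
  | _ => []
  end.

Fixpoint guarded (P : thread) : Prop :=
  match P with
  | TEnd | TVar _ => True
  | TOut bs | TIn bs => guardedB bs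
  | TMu _ X P' => ~ In X (unguarded P') /\ guarded P'
  | TPend _ _ _ P' => guarded P'
  end
with guardedB (bs : branches) : Prop :=
  match bs with
  | BNil => True
  | BCons _ _ _ P bs' => guarded P /\ guardedB bs'
  end.

(* a thread proper (not a thread state): no pending outputs *)
Fixpoint nopend (P : thread) : Prop :=
  match P with
  | TEnd | TVar _ => True
  | TOut bs | TIn bs => nopendB bs
  | TMu _ _ P' => nopend P'
  | TPend _ _ _ _ => False
  end
with nopendB (bs : branches) : Prop :=
  match bs with
  | BNil => True
  | BCons _ _ _ P bs' => nopend P /\ nopendB bs'
  end.

Fixpoint tags (P : thread) : list tag :=
  match P with
  | TEnd | TVar _ => []
  | TOut bs | TIn bs => tagsB bs
  | TMu a _ P' => a :: tags P'
  | TPend _ _ a P' => a :: tags P'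
  end
with tagsB (bs : branches) : list tag :=
  match bs with
  | BNil => []
  | BCons _ _ a P bs' => a :: tags P ++ tagsB bs'
  end.

(* Networks modulo assoc/comm/unit with distinct locations:
   a partial map from locations to thread states. *)
Definition net := loc -> option thread.

Definition upd (N : net) (p : loc) (P : thread) : net :=
  fun r => if Nat.eqb r p then Some P else N r.

Definition initial_net (N : net) : Prop :=
  (exists locs : list loc, forall p, N p <> None -> In p locs) /\
  (forall p P, N p = Some P ->
     fv P = [] /\ guarded P /\ nopend P /\ NoDup (tags P)).

Inductive act : Type :=
| ATau : loc -> act
| AComm : loc -> label -> loc -> act.

Definition comp (a : act) : list loc :=
  match a with
  | ATau p => [p]
  | AComm p _ q => [p; q]
  end.

(* an instruction: an occurrence, named by its location and its tag *)
Definition instr := (loc * tag)%type.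

(* step N a I N' : a transition from N with label a, stemming from the set of
   instructions I, to N' *)
Inductive step : net -> act -> list instr -> net -> Prop :=
| st_choice : forall N p bs q l a P,
    N p = Some (TOut bs) -> InB q l a P bs ->
    step N (ATau p) [(p, a)] (upd N p (TPend q l a P))
| st_unfold : forall N p a X P,
    N p = Some (TMu a X P) ->
    step N (ATau p) [(p, a)] (upd N p (subst X (TMu a X P) P))
| st_comm : forall N p q l a Q bs b P,
    p <> q ->
    N p = Some (TPend q l a Q) -> N q = Some (TIn bs) -> InB p l b P bs ->
    step N (AComm p l q) [(p, a); (q, b)] (upd (upd N p Q) q P).

Definition reachable (N N' : net) : Prop :=
  Relation_Operators.clos_refl_trans net
    (fun M M' => exists a I, step M a I M') N N'.

(* A path: states pst 0, pst 1, ... and transitions (pact j, pins j) from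
   pst j to pst (j+1); plen = Some n for a finite path with n transitions,
   None for an infinite one. *)
Record path : Type := mkPath {
  pst : nat -> net;
  pact : nat -> act;
  pins : nat -> list instr;
  plen : option nat }.

Definition tr_idx (pi : path) (j : nat) : Prop :=
  match plen pi with None => True | Some n => j < n end.
Definition st_idx (pi : path) (j : nat) : Prop :=
  match plen pi with None => True | Some n => j <= n end.

Definition is_path (pi : path) : Prop :=
  (forall j, tr_idx pi j -> step (pst pi j) (pact pi j) (pins pi j) (pst pi (S j))) /\
  (forall n, plen pi = Some n -> forall a I N', ~ step (pst pi n) a I N').

Definition enabled (i : instr) (N : net) : Prop :=
  exists a I N', step N a I N' /\ In i I.

Definition WI_fair (pi : path) : Prop :=
  forall k, st_idx pi k ->
  forall i : instr,
    (forall j, k <= j -> st_idx pi j -> enabled i (pst pi j)) ->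
    exists j, k <= j /\ tr_idx pi j /\ In i (pins pi j).

(* justness: for every suffix starting in state pst k and every transition t
   enabled there, the suffix contains a transition not concurrent with t *)
Definition just (pi : path) : Prop :=
  forall k, st_idx pi k ->
  forall a I N', step (pst pi k) a I N' ->
    exists j, k <= j /\ tr_idx pi j /\
      exists r, In r (comp a) /\ In r (comp (pact pi j)).

(* An instruction is identified by its location and its tag; the head tags of
   a thread state are the tags of the instructions that can fire first there.

   WI-fair -> just.  A transition only depends on the components at its
   locations.  If no later transition touches them, it stays enabled forever,
   so its instructions are perpetually enabled; WI-fairness makes one of them
   engaged in, by a transition sharing a location with it.

   just -> WI-fair.  Let (p,x) be perpetually enabled from state k.
   (1) Some later transition touches p: otherwise p is frozen, and justness
       applied to a transition enabling (p,x) forces a move of p, directly or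
       through its partner (a pending sender can only move by communicating
       with its receiver; a receiver waiting for the frozen sender p can only
       move by taking another branch, which strictly shrinks its thread, and
       this cannot happen forever).
   (2) The first such transition engages in (p,x), since x is a head tag of p
       just before and just after it.  For an input this relies on the
       invariant [coherent]: no top tag of a branching reappears as a head tag
       of one of its continuations.  It holds initially because tags are
       distinct, and is preserved by every thread reduction, unfolding
       included, because the head tag introduced by unfolding is a mu tag
       while top tags of branchings are prefix tags. *)
From Stdlib Require Import List Arith Lia Classical Wf_nat.
Import ListNotations.

Scheme thread_mut := Induction for thread Sort Prop
  with branches_mut := Induction for branches Sort Prop.

Fixpoint toptags (bs : branches) : list tag :=
  match bs with BNil => [] | BCons _ _ a _ bs' => a :: toptags bs' end.

Definition headtags (T : thread) : list tag :=
  match T with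
  | TOut bs | TIn bs => toptags bs
  | TMu a _ _ | TPend _ _ a _ => [a]
  | TEnd | TVar _ => []
  end.

Lemma InB_toptags bs q l a P : InB q l a P bs -> In a (toptags bs).
Proof.
  induction bs as [|p0 l0 a0 P0 bs IH]; simpl; [tauto|].
  intros [(_ & _ & <- & _)|H]; auto.
Qed.

Lemma toptags_tagsB bs x : In x (toptags bs) -> In x (tagsB bs).
Proof.
  induction bs as [|p0 l0 a0 P0 bs IH]; simpl; [tauto|].
  intros [<-|H]; auto. right; apply in_or_app; auto.
Qed.

Lemma headtags_tags T x : In x (headtags T) -> In x (tags T).
Proof. destruct T; simpl; auto using toptags_tagsB; tauto. Qed.

Lemma InB_tags bs q l a P : InB q l a P bs -> incl (tags P) (tagsB bs).
Proof.
  induction bs as [|p0 l0 a0 P0 bs IH]; simpl; [tauto|].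
  intros [(_ & _ & _ & <-)|H] x Hx; right; apply in_or_app; [left|right]; auto.
  exact (IH H x Hx).
Qed.

Lemma NoDup_app_disjoint (l1 l2 : list tag) x : NoDup (l1 ++ l2) -> In x l1 -> ~ In x l2.
Proof.
  induction l1 as [|y l1 IH]; simpl; [tauto|].
  intros Hnd [<-|Hx] Hx2; inversion Hnd as [|? ? Hy Hnd']; subst.
  - apply Hy, in_or_app; auto.
  - exact (IH Hnd' Hx Hx2).
Qed.

Lemma toptags_substB X R bs : toptags (substB X R bs) = toptags bs.
Proof. induction bs; simpl; congruence. Qed.

Lemma InB_substB X R bs r l b P' : InB r l b P' (substB X R bs) ->
  exists P, InB r l b P bs /\ P' = subst X R P.
Proof.
  induction bs as [|p0 l0 a0 P0 bs IH]; simpl; [tauto|].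
  intros [(-> & -> & -> & ->)|H]; [eexists; split; [left|]; eauto|].
  destruct (IH H) as (P & HP & ->); eauto.
Qed.

Lemma headtags_subst X R P x : In x (headtags (subst X R P)) ->
  In x (headtags P) \/ In x (headtags R).
Proof.
  destruct P; simpl; rewrite ?toptags_substB; auto;
    destruct (Nat.eqb X v); auto.
Qed.

(** * The coherence invariant on thread states *)

Definition separated (bs : branches) : Prop :=
  forall r l b P x, InB r l b P bs -> In x (toptags bs) -> ~ In x (headtags P).

(* Every branching is separated, where M is the set of mu tags: recursion
   binders carry tags in M and branch prefixes carry tags outside M. *)
Fixpoint coherent (M : tag -> Prop) (T : thread) : Prop :=
  match T with
  | TEnd | TVar _ => True
  | TOut bs | TIn bs => coherentB M bs /\ separated bs
  | TMu a _ P => M a /\ coherent M P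
  | TPend _ _ _ P => coherent M P
  end
with coherentB (M : tag -> Prop) (bs : branches) : Prop :=
  match bs with
  | BNil => True
  | BCons _ _ a P bs' => ~ M a /\ coherent M P /\ coherentB M bs'
  end.

Lemma coherentB_toptags M bs x : coherentB M bs -> In x (toptags bs) -> ~ M x.
Proof.
  induction bs as [|p0 l0 a0 P0 bs IH]; simpl; [tauto|].
  intros (Ha & _ & Hbs) [<-|Hx]; auto.
Qed.

Lemma coherentB_InB M bs r l b P : coherentB M bs -> InB r l b P bs -> coherent M P.
Proof.
  induction bs as [|p0 l0 a0 P0 bs IH]; simpl; [tauto|].
  intros (_ & HP & Hbs) [(_ & _ & _ & <-)|H]; auto.
Qed.

(* Substituting a body whose head tags are mu tags keeps branchings
   separated, since top tags are never mu tags. *)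
Lemma separated_substB M X R bs :
  coherentB M bs -> separated bs -> (forall x, In x (headtags R) -> M x) ->
  separated (substB X R bs).
Proof.
  intros Hc Hsep HR r l b P' x HB Hx Hh.
  rewrite toptags_substB in Hx. destruct (InB_substB _ _ _ _ _ _ _ HB) as (P & HP & ->).
  destruct (headtags_subst _ _ _ _ Hh) as [H|H].
  - exact (Hsep _ _ _ _ _ HP Hx H).
  - exact (coherentB_toptags _ _ _ Hc Hx (HR _ H)).
Qed.

Lemma coherent_subst M X R : coherent M R -> (forall x, In x (headtags R) -> M x) ->
  forall T, coherent M T -> coherent M (subst X R T).
Proof.
  intros HR Hhead.
  apply (thread_mut (fun T => coherent M T -> coherent M (subst X R T))
                    (fun bs => coherentB M bs -> coherentB M (substB X R bs)));
    simpl; intros; try tauto.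
  - split; [tauto|]. apply (separated_substB M); tauto.
  - split; [tauto|]. apply (separated_substB M); tauto.
  - destruct (Nat.eqb X v); auto.
  - destruct (Nat.eqb X v); simpl; tauto.
Qed.

Inductive tred : thread -> thread -> Prop :=
| tred_choice bs q l a P : InB q l a P bs -> tred (TOut bs) (TPend q l a P)
| tred_unfold a X P : tred (TMu a X P) (subst X (TMu a X P) P)
| tred_input bs r l b P : InB r l b P bs -> tred (TIn bs) P
| tred_output q l a P : tred (TPend q l a P) P.

Lemma coherent_tred M T T' : coherent M T -> tred T T' -> coherent M T'.
Proof.
  intros Hc Hr; destruct Hr; simpl in *.
  - exact (coherentB_InB _ _ _ _ _ _ (proj1 Hc) H).
  - apply coherent_subst; simpl; intuition congruence.
  - exact (coherentB_InB _ _ _ _ _ _ (proj1 Hc) H).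
  - exact Hc.
Qed.

Lemma separated_of_nodup bs : NoDup (tagsB bs) -> separated bs.
Proof.
  induction bs as [|p0 l0 a0 P0 bs IH]; intros Hnd r l b P x HB Hx Hh; [destruct HB|].
  simpl in Hnd, HB, Hx.
  inversion Hnd as [|? ? Ha0 Hnd']; subst.
  destruct HB as [(_ & _ & _ & <-)|HB]; destruct Hx as [<-|Hx].
  - apply Ha0, in_or_app; left; apply headtags_tags; auto.
  - exact (NoDup_app_disjoint _ _ _ Hnd' (headtags_tags _ _ Hh) (toptags_tagsB _ _ Hx)).
  - apply Ha0, in_or_app; right; exact (InB_tags _ _ _ _ _ HB _ (headtags_tags _ _ Hh)).
  - exact (IH (NoDup_app_remove_l _ _ Hnd') _ _ _ _ _ HB Hx Hh).
Qed.

Fixpoint mtags (T : thread) : list tag :=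
  match T with
  | TEnd | TVar _ => []
  | TOut bs | TIn bs => mtagsB bs
  | TMu a _ P => a :: mtags P
  | TPend _ _ _ P => mtags P
  end
with mtagsB (bs : branches) : list tag :=
  match bs with
  | BNil => []
  | BCons _ _ _ P bs' => mtags P ++ mtagsB bs'
  end.

Lemma mtags_tags :
  (forall T, incl (mtags T) (tags T)) /\ (forall bs, incl (mtagsB bs) (tagsB bs)).
Proof.
  split; [apply (thread_mut _ (fun bs => incl (mtagsB bs) (tagsB bs)))
         |apply (branches_mut (fun T => incl (mtags T) (tags T)))];
    simpl; intros; auto using incl_refl, incl_nil_l, incl_tl, incl_cons, in_eq, incl_app,
    incl_appl, incl_appr.
Qed.

Lemma coherent_of_nodup M :
  forall T, NoDup (tags T) -> (forall a, In a (tags T) -> (M a <-> In a (mtags T))) ->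
  coherent M T.
Proof.
  destruct mtags_tags as [HmT HmB].
  apply (thread_mut
    (fun T => NoDup (tags T) ->
       (forall a, In a (tags T) -> (M a <-> In a (mtags T))) -> coherent M T)
    (fun bs => NoDup (tagsB bs) ->
       (forall a, In a (tagsB bs) -> (M a <-> In a (mtagsB bs))) -> coherentB M bs));
    simpl; intros; auto using separated_of_nodup.
  -
    inversion H0 as [|? ? Ha Hnd]; subst. split; [apply H1; auto|].
    apply H; auto. intros x Hx. rewrite H1 by auto.
    split; [intros [<-|]|]; tauto.
  - inversion H0 as [|? ? Ha Hnd]; subst. apply H; auto.
  -
    inversion H1 as [|? ? Ha Hnd]; subst. repeat split.
    + rewrite H2 by auto. intro Hm. apply Ha.
      apply in_app_or in Hm as [Hm|Hm]; apply in_or_app; [left|right];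
        [apply HmT|apply HmB]; auto.
    + apply H; [eapply NoDup_app_remove_r; eauto|]. intros x Hx.
      rewrite H2 by (right; apply in_or_app; auto).
      split; [|intros; apply in_or_app; auto].
      intros Hm; apply in_app_or in Hm as [Hm|Hm]; auto.
      exfalso; exact (NoDup_app_disjoint _ _ _ Hnd Hx (HmB _ _ Hm)).
    + apply H0; [eapply NoDup_app_remove_l; eauto|]. intros x Hx.
      rewrite H2 by (right; apply in_or_app; auto).
      split; [|intros; apply in_or_app; auto].
      intros Hm; apply in_app_or in Hm as [Hm|Hm]; auto.
      exfalso; exact (NoDup_app_disjoint _ _ _ Hnd (HmT _ _ Hm) Hx).
Qed.

Lemma upd_eq N p P : upd N p P p = Some P.
Proof. unfold upd; rewrite Nat.eqb_refl; auto. Qed.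

Lemma upd_neq N p P r : r <> p -> upd N p P r = N r.
Proof. intros; unfold upd; destruct (Nat.eqb_spec r p); congruence. Qed.

Lemma step_local N a I N' r T' : step N a I N' -> N' r = Some T' ->
  N r = Some T' \/ exists T, N r = Some T /\ tred T T'.
Proof.
  intros Hs E; destruct Hs; unfold upd in E.
  - destruct (Nat.eqb_spec r p) as [->|]; auto.
    inversion E; subst; eauto using tred.
  - destruct (Nat.eqb_spec r p) as [->|]; auto.
    inversion E; subst; eauto using tred.
  - destruct (Nat.eqb_spec r q) as [->|]; [inversion E; subst; eauto using tred|].
    destruct (Nat.eqb_spec r p) as [->|]; auto.
    inversion E; subst; eauto using tred.
Qed.

Lemma step_frame N a I N' r : step N a I N' -> ~ In r (comp a) -> N' r = N r.
Proof.
  intros H Hr; destruct H; simpl in Hr; rewrite ?upd_neq; intuition.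
Qed.

Lemma instr_loc N a I N' p x : step N a I N' -> In (p, x) I -> In p (comp a).
Proof. intros H Hi; destruct H; simpl in *; intuition congruence. Qed.

Lemma step_instr N a I N' : step N a I N' -> exists i, In i I.
Proof. intros H; destruct H; simpl; eauto. Qed.

Lemma step_agree N a I N' M : step N a I N' ->
  (forall r, In r (comp a) -> M r = N r) -> exists M', step M a I M'.
Proof.
  intros H Hag; destruct H; simpl in Hag; eexists.
  - eapply st_choice; [rewrite Hag|]; eauto.
  - eapply st_unfold; rewrite Hag; eauto.
  - eapply st_comm; [| rewrite Hag | rewrite Hag |]; eauto.
Qed.

Lemma enabled_cases N a I N' p x : step N a I N' -> In (p, x) I ->
   (a = ATau p /\ ((exists bs, N p = Some (TOut bs) /\ In x (toptags bs)) \/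
                   (exists X P, N p = Some (TMu x X P))))
 \/ (exists q l Q, N p = Some (TPend q l x Q) /\ a = AComm p l q)
 \/ (exists s l y Q bs P, N p = Some (TIn bs) /\ N s = Some (TPend p l y Q)
        /\ InB s l x P bs /\ a = AComm s l p).
Proof.
  intros H Hi; destruct H; simpl in Hi.
  - destruct Hi as [Hi|[]]; inversion Hi; subst.
    left; split; auto; left; eauto using InB_toptags.
  - destruct Hi as [Hi|[]]; inversion Hi; subst. left; split; eauto.
  - destruct Hi as [Hi|[Hi|[]]]; inversion Hi; subst.
    + right; left; eauto.
    + right; right; do 6 eexists; eauto.
Qed.

Lemma enabled_head p x N : enabled (p, x) N ->
  exists T, N p = Some T /\ In x (headtags T).
Proof.
  intros (a & I & N' & Hs & Hi).
  destruct (enabled_cases _ _ _ _ _ _ Hs Hi) as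
    [[_ [(bs & E & Hx)|(X & P & E)]]|[(q & l & Q & E & _)|(s & l & y & Q & bs & P & E & _ & HB & _)]];
    eexists; split; eauto; simpl; eauto using InB_toptags.
Qed.

Lemma pending_enabled_comm p x N q l y Q : enabled (p, x) N ->
  N p = Some (TPend q l y Q) -> exists I N', step N (AComm p l q) I N'.
Proof.
  intros (a & I & N' & Hs & Hi) Ep.
  destruct (enabled_cases _ _ _ _ _ _ Hs Hi) as
    [[_ [(bs & E & _)|(X & P & E)]]|[(q' & l' & Q' & E & ->)|(s & l' & y' & Q' & bs & P & E & _)]];
    rewrite Ep in E; inversion E; subst; eauto.
Qed.

Lemma comm_receiver_input N p l q I N' : step N (AComm p l q) I N' ->
  exists bs, N q = Some (TIn bs).
Proof. intros H; inversion H; subst; eauto. Qed.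

Definition touch_effect (N' : net) (a : act) (I : list instr) (p : loc) (T : thread) : Prop :=
  match T with
  | TOut _ => exists q l y P, I = [(p, y)] /\ N' p = Some (TPend q l y P)
  | TMu y _ _ => I = [(p, y)]
  | TPend q l y _ => a = AComm p l q /\ In (p, y) I
  | TIn bs => exists r l b P, InB r l b P bs /\ N' p = Some P
  | TEnd | TVar _ => False
  end.

Lemma touched_component N a I N' p T : step N a I N' -> In p (comp a) -> N p = Some T ->
  touch_effect N' a I p T.
Proof.
  intros H Hp E; destruct H; simpl in Hp.
  - destruct Hp as [<-|[]]. rewrite H in E; inversion E; subst; simpl.
    do 4 eexists; split; eauto using upd_eq.
  - destruct Hp as [<-|[]]. rewrite H in E; inversion E; subst; simpl; auto.
  - destruct Hp as [<-|[<-|[]]].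
    + rewrite H0 in E; inversion E; subst; simpl; auto.
    + rewrite H1 in E; inversion E; subst; simpl. eauto 6 using upd_eq.
Qed.

Lemma head_kept_engaged N a I N' p x M T T' : step N a I N' -> In p (comp a) ->
  N p = Some T -> coherent M T -> In x (headtags T) ->
  N' p = Some T' -> In x (headtags T') -> In (p, x) I.
Proof.
  intros Hs Hp E Hc Hx E' Hx'.
  pose proof (touched_component _ _ _ _ _ _ Hs Hp E) as Heff.
  destruct T; simpl in Heff, Hx; try contradiction.
  - destruct Heff as (q & l & y & P & -> & E''). rewrite E'' in E'; inversion E'; subst.
    simpl in Hx'; destruct Hx' as [<-|[]]; simpl; auto.
  - destruct Heff as (r & l & c & P & HB & E''). rewrite E'' in E'; inversion E'; subst.
    exfalso; exact (proj2 Hc _ _ _ _ _ HB Hx Hx').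
  - destruct Hx as [<-|[]]; rewrite Heff; simpl; auto.
  - destruct Hx as [<-|[]]; apply Heff.
Qed.

Definition coherent_net (N : net) : Prop :=
  forall p T, N p = Some T -> exists M, coherent M T.

Lemma coherent_initial N0 : initial_net N0 -> coherent_net N0.
Proof.
  intros [_ Hinit] p T E. destruct (Hinit p T E) as (_ & _ & _ & Hnd).
  exists (fun a => In a (mtags T)). apply coherent_of_nodup; tauto.
Qed.

Lemma coherent_net_step N a I N' : coherent_net N -> step N a I N' -> coherent_net N'.
Proof.
  intros Hc Hs r T' E. destruct (step_local _ _ _ _ _ _ Hs E) as [E0|(T & E0 & Hr)]; eauto.
  destruct (Hc _ _ E0) as [M HM]. exists M; eauto using coherent_tred.
Qed.

Lemma coherent_reachable N0 N : initial_net N0 -> reachable N0 N -> coherent_net N.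
Proof.
  intros Hi Hr. apply coherent_initial in Hi. revert Hi.
  induction Hr as [N N' (a & I & Hs)| |]; eauto using coherent_net_step.
Qed.

Lemma tr_st pi j : tr_idx pi j -> st_idx pi j /\ st_idx pi (S j).
Proof. unfold tr_idx, st_idx; destruct (plen pi); lia. Qed.

Lemma st_tr pi j : st_idx pi (S j) -> tr_idx pi j.
Proof. unfold tr_idx, st_idx; destruct (plen pi); lia. Qed.

Lemma st_le pi j j' : j <= j' -> st_idx pi j' -> st_idx pi j.
Proof. unfold st_idx; destruct (plen pi); lia. Qed.

Lemma tr_le pi j j' : j <= j' -> tr_idx pi j' -> tr_idx pi j.
Proof. unfold tr_idx; destruct (plen pi); lia. Qed.

Lemma coherent_along_path N0 pi : initial_net N0 -> reachable N0 (pst pi 0) -> is_path pi ->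
  forall j, st_idx pi j -> coherent_net (pst pi j).
Proof.
  intros Hi Hr [Hs _] j; induction j as [|j IH]; intros Hj.
  - exact (coherent_reachable _ _ Hi Hr).
  - pose proof (st_tr _ _ Hj) as Ht.
    exact (coherent_net_step _ _ _ _ (IH (proj1 (tr_st _ _ Ht))) (Hs j Ht)).
Qed.

Lemma stable_until_touched pi m r j : is_path pi -> m <= j -> st_idx pi j ->
  (forall j', m <= j' -> j' < j -> ~ In r (comp (pact pi j'))) ->
  pst pi j r = pst pi m r.
Proof.
  intros [Hs _]; induction j as [|j IH]; intros Hmj Hst Hn.
  - replace m with 0 by lia; auto.
  - destruct (Nat.eq_dec m (S j)) as [<-|Hne]; auto.
    pose proof (st_tr _ _ Hst) as Ht.
    rewrite (step_frame _ _ _ _ _ (Hs j Ht)) by (apply Hn; lia).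
    apply IH; [lia | apply (proj1 (tr_st _ _ Ht)) | intros; apply Hn; lia].
Qed.

Definition untouched_from (pi : path) (k : nat) (r : loc) : Prop :=
  forall j, k <= j -> tr_idx pi j -> ~ In r (comp (pact pi j)).

Lemma untouched_stable pi k r j : is_path pi -> untouched_from pi k r ->
  k <= j -> st_idx pi j -> pst pi j r = pst pi k r.
Proof.
  intros Hp Hu Hkj Hj. apply stable_until_touched; auto.
  intros j' H1 H2. apply Hu; auto. apply st_tr, (st_le _ _ j); [lia|auto].
Qed.

Lemma first_touch pi r m : is_path pi -> st_idx pi m ->
  (exists j, m <= j /\ tr_idx pi j /\ In r (comp (pact pi j))) ->
  exists j, m <= j /\ tr_idx pi j /\ In r (comp (pact pi j)) /\ pst pi j r = pst pi m r.
Proof.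
  intros Hp Hm Hex.
  destruct (dec_inh_nat_subset_has_unique_least_element _ (fun n => classic _) Hex)
    as (j & ((Hmj & Ht & Hr) & Hmin) & _).
  exists j; repeat split; auto.
  apply stable_until_touched; auto; [apply (proj1 (tr_st _ _ Ht))|].
  intros j' H1 H2 H3.
  assert (j <= j') by (apply Hmin; repeat split; eauto using tr_le, Nat.lt_le_incl).
  lia.
Qed.

(** * WI-fairness implies justness *)

Lemma WI_fair_just pi : is_path pi -> WI_fair pi -> just pi.
Proof.
  intros Hp HW k Hk a I N' Hs.
  apply NNPP; intro Hno.
  assert (Hfrozen : forall r, In r (comp a) -> untouched_from pi k r).
  { intros r Hr j Hkj Ht Hrj. apply Hno; eauto 6. }
  destruct (step_instr _ _ _ _ Hs) as [[p x] Hi].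
  destruct (HW k Hk (p, x)) as (j & Hkj & Ht & Hin).
  - intros j Hkj Hj.
    destruct (step_agree _ _ _ _ (pst pi j) Hs) as [M' HM].
    + intros r Hr; apply untouched_stable; auto.
    + exists a, I, M'; auto.
  - apply (Hfrozen p (instr_loc _ _ _ _ _ _ Hs Hi) j Hkj Ht).
    exact (instr_loc _ _ _ _ _ _ (proj1 Hp j Ht) Hin).
Qed.

(** * Justness implies WI-fairness *)

Lemma no_infinite_descent (P : nat -> Prop) (f : nat -> nat) k : P k ->
  (forall m, P m -> exists m', P m' /\ f m' < f m) -> False.
Proof.
  intros Hk Hdesc.
  assert (H : forall n m, P m -> f m < n -> False).
  { induction n as [|n IH]; intros m Hm Hlt; [lia|].
    destruct (Hdesc m Hm) as (m' & Hm' & Hlt'). apply (IH m'); auto; lia. }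
  exact (H (S (f k)) k Hk (Nat.lt_succ_diag_r _)).
Qed.

Fixpoint tsize (T : thread) : nat :=
  match T with
  | TOut bs | TIn bs => S (bsize bs)
  | TMu _ _ P | TPend _ _ _ P => S (tsize P)
  | TEnd | TVar _ => 1
  end
with bsize (bs : branches) : nat :=
  match bs with
  | BNil => 0
  | BCons _ _ _ P bs' => tsize P + bsize bs'
  end.

Lemma InB_size bs r l b P : InB r l b P bs -> tsize P <= bsize bs.
Proof.
  induction bs as [|p0 l0 a0 P0 bs IH]; simpl; [tauto|].
  intros [(_ & _ & _ & <-)|H]; [|specialize (IH H)]; lia.
Qed.

Lemma pending_sender_moves_receiver pi k s l p y Q I N' : is_path pi -> just pi ->
  st_idx pi k -> pst pi k s = Some (TPend p l y Q) -> step (pst pi k) (AComm s l p) I N' ->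
  exists j, k <= j /\ tr_idx pi j /\ In p (comp (pact pi j)).
Proof.
  intros Hp HJ Hk Es Hs.
  destruct (HJ k Hk _ _ _ Hs) as (j & Hkj & Ht & r & [<-|[<-|[]]] & Hr); [|eauto].
  destruct (first_touch pi s k Hp Hk) as (j' & Hkj' & Ht' & Hr' & E); [eauto|].
  rewrite Es in E.
  destruct (touched_component _ _ _ _ _ _ (proj1 Hp j' Ht') Hr' E) as [Ea _].
  exists j'; rewrite Ea; simpl; auto.
Qed.

(* Under justness, a receiver q cannot wait forever for a frozen sender p:
   each of its moves takes another branch and shrinks its thread. *)
Lemma waiting_receiver_impossible pi k p l q : is_path pi -> just pi ->
  st_idx pi k -> untouched_from pi k p ->
  (forall m, k <= m -> st_idx pi m -> exists I N', step (pst pi m) (AComm p l q) I N') ->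
  False.
Proof.
  intros Hp HJ Hk Hu Hready.
  apply (no_infinite_descent (fun m => k <= m /\ st_idx pi m)
           (fun m => match pst pi m q with Some T => tsize T | None => 0 end) k);
    [auto|].
  intros m [Hkm Hm].
  destruct (Hready m Hkm Hm) as (I & N' & Hs).
  destruct (comm_receiver_input _ _ _ _ _ _ Hs) as [bs Eq].
  destruct (HJ m Hm _ _ _ Hs) as (j & Hmj & Ht & r & [<-|[<-|[]]] & Hr).
  { exfalso; apply (Hu j); auto; lia. }
  destruct (first_touch pi q m Hp Hm) as (j' & Hmj' & Ht' & Hr' & E); [eauto|].
  rewrite Eq in E.
  destruct (touched_component _ _ _ _ _ _ (proj1 Hp j' Ht') Hr' E) as (r0 & l0 & b & P & HB & E').
  exists (S j'). split; [split; [lia|exact (proj2 (tr_st _ _ Ht'))]|].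
  rewrite E', Eq. pose proof (InB_size _ _ _ _ _ HB). simpl; lia.
Qed.

Lemma enabled_owner_touched pi k p x : is_path pi -> just pi -> st_idx pi k ->
  (forall j, k <= j -> st_idx pi j -> enabled (p, x) (pst pi j)) ->
  exists j, k <= j /\ tr_idx pi j /\ In p (comp (pact pi j)).
Proof.
  intros Hp HJ Hk Hen. apply NNPP; intro Hno.
  assert (Hu : untouched_from pi k p) by (intros j Hkj Ht Hr; apply Hno; eauto).
  destruct (Hen k (le_n k) Hk) as (a & I & N' & Hs & Hi).
  destruct (enabled_cases _ _ _ _ _ _ Hs Hi) as
    [[-> _]|[(q & l & Q & Ep & ->)|(s & l & y & Q & bs & P & _ & Es & _ & ->)]].
  - destruct (HJ k Hk _ _ _ Hs) as (j & Hkj & Ht & r & [<-|[]] & Hr). eauto.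
  - apply (waiting_receiver_impossible pi k p l q Hp HJ Hk Hu).
    intros m Hkm Hm. apply (pending_enabled_comm p x _ _ _ x Q (Hen m Hkm Hm)).
    rewrite (untouched_stable pi k p m); auto.
  - apply Hno; eauto using pending_sender_moves_receiver.
Qed.

Lemma just_WI_fair N0 pi : initial_net N0 -> reachable N0 (pst pi 0) -> is_path pi ->
  just pi -> WI_fair pi.
Proof.
  intros Hi Hr Hp HJ k Hk [p x] Hen.
  destruct (first_touch pi p k Hp Hk (enabled_owner_touched pi k p x Hp HJ Hk Hen))
    as (j & Hkj & Ht & Hpj & E).
  destruct (tr_st _ _ Ht) as [Hj HSj].
  destruct (enabled_head p x _ (Hen k (le_n k) Hk)) as (T & ET & Hx).
  destruct (enabled_head p x _ (Hen (S j) ltac:(lia) HSj)) as (T' & ET' & Hx').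
  rewrite <- E in ET.
  destruct (coherent_along_path N0 pi Hi Hr Hp j Hj p T ET) as [M HM].
  exists j; repeat split; auto.
  exact (head_kept_engaged _ _ _ _ _ _ _ _ _ (proj1 Hp j Ht) Hpj ET HM Hx ET' Hx').
Qed.

Theorem mainTheorem15 :
  forall (N0 : net) (pi : path),
    initial_net N0 ->
    reachable N0 (pst pi 0) ->
    is_path pi ->
    (WI_fair pi <-> just pi).
Proof.
  intros N0 pi Hi Hr Hp; split.
  - apply WI_fair_just; auto.
  - apply (just_WI_fair N0); auto.
Qed.
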